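(* Let $\{\mathbb{P}_{s,t}\in\mathcal{Q}:0\le s\le t\}$ be a quadratic harness with parameters $\eta,\theta,\sigma,\tau,\gamma$, and let $\mathbb{A}_t$ ($t>0$) be its infinitesimal generator. For $t>0$ put $$\mathbb{H}_t=\mathbb{A}_t\mathbb{F}-\mathbb{F}\mathbb{A}_t,\qquad \mathbb{T}_t=\mathbb{F}-t\mathbb{H}_t .$$ Then $$\mathbb{H}_t\mathbb{T}_t-\gamma\,\mathbb{T}_t\mathbb{H}_t=\mathbb{E}+\theta\mathbb{H}_t+\eta\mathbb{T}_t+\tau\mathbb{H}_t^{2}+\sigma\mathbb{T}_t^{2}.$$
   Context: $\mathcal{Q}$ denotes the real linear space of all infinite sequences $\mathbb{P}=(p_0,p_1,p_2,\dots)$ of real polynomials in one variable $x$, equipped with the product $\mathbb{P}\mathbb{Q}=\mathbb{R}=(r_0,r_1,\dots)$, where for $\mathbb{Q}=(q_0,q_1,\dots)$ one sets $r_k(x)=\sum_{j=0}^{\deg q_k}[q_k]_j\,p_j(x)$, and $[q]_j$ denotes the coefficient of $x^j$ in $q$. (Equivalently, identifying a linear map $\mathsf{P}$ of the polynomial space with the sequence $(\mathsf{P}(1),\mathsf{P}(x),\mathsf{P}(x^2),\dots)$, the product corresponds to composition $\mathsf{P}\circ\mathsf{Q}$.) Powers are taken with respect to this product. Special elements: $\mathbb{E}=(1,x,x^2,\dots)$ (the identity), $\mathbb{F}=(x,x^2,x^3,\dots)$, $\mathbb{D}=(0,1,x,x^2,\dots)$. A polynomial process is a family $\{\mathbb{P}_{s,t}\in\mathcal{Q}:0\le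 s\le t\}$ such that: (i) for all $0\le s\le t$ and $n\ge0$ the $n$-th component of $\mathbb{P}_{s,t}$ is a polynomial of degree exactly $n$; (ii) $\mathbb{P}_{s,t}(\mathbb{E}-\mathbb{F}\mathbb{D})=\mathbb{E}-\mathbb{F}\mathbb{D}$; (iii) $\mathbb{P}_{s,t}\mathbb{P}_{t,u}=\mathbb{P}_{s,u}$ for $0\le s\le t\le u$. Given real numbers $\eta,\theta,\sigma,\tau,\gamma$, a polynomial process is a quadratic harness with parameters $\eta,\theta,\sigma,\tau,\gamma$ if: (a) $\mathbb{P}_{s,t}(\mathbb{F}\mathbb{D}-\mathbb{F}^2\mathbb{D}^2)=\mathbb{F}\mathbb{D}-\mathbb{F}^2\mathbb{D}^2$ for all $0\le s\le t$; (b) there is $\mathbb{X}\in\mathcal{Q}$ with $\mathbb{P}_{0,t}\mathbb{F}=(\mathbb{F}+t\mathbb{X})\mathbb{P}_{0,t}$ for all $t\ge0$; (c) this $\mathbb{X}$ satisfies $\mathbb{X}\mathbb{F}-\gamma\mathbb{F}\mathbb{X}=\mathbb{E}+\eta\mathbb{F}+\theta\mathbb{X}+\sigma\mathbb{F}^2+\tau\mathbb{X}^2$. The infinitesimal generator is $\mathbb{A}_t=\lim_{h\to0^+}\frac1h(\mathbb{P}_{t-h,t}-\mathbb{E})\in\mathcal{Q}$, $t>0$, the limit taken coefficientwise in each component (it exists for such processes). *)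

From HB Require Import structures.
From mathcomp Require Import all_boot all_order all_algebra.
From mathcomp Require Import all_classical all_reals all_analysis.
Set Implicit Arguments. Unset Strict Implicit. Unset Printing Implicit Defensive.
Import Order.TTheory GRing.Theory Num.Theory.
Local Open Scope ring_scope.
Local Open Scope classical_set_scope.
Import numFieldNormedType.Exports.

Definition Qseq (R : realType) := nat -> {poly R}.

Section Q.
Variable R : realType.
Implicit Types P Q : Qseq R.

Definition qmul P Q : Qseq R :=
  fun k => \sum_(j < size (Q k)) (Q k)`_j *: P j.
Definition qadd P Q : Qseq R := fun k => P k + Q k.
Definition qsub P Q : Qseq R := fun k => P k - Q k.
Definition qscale (c : R) P : Qseq R := fun k => c *: P k.
Definition qE : Qseq R := fun n => ('X ^+ n : {poly R}).
Definition qF : Qseq R := fun n => ('X ^+ n.+1 : {poly R}).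
Definition qD : Qseq R := fun n => if n is m.+1 then ('X ^+ m : {poly R}) else 0.
Fixpoint qexp P (n : nat) : Qseq R :=
  if n is m.+1 then qmul P (qexp P m) else qE.

Definition poly_process (P : R -> R -> Qseq R) : Prop :=
  [/\ (forall s t n, 0 <= s -> s <= t -> size (P s t n) = n.+1),
      (forall s t, 0 <= s -> s <= t ->
         qmul (P s t) (qsub qE (qmul qF qD)) = qsub qE (qmul qF qD)) &
      (forall s t u, 0 <= s -> s <= t -> t <= u ->
         qmul (P s t) (P t u) = P s u)].

Definition quadratic_harness (P : R -> R -> Qseq R)
    (eta theta sigma tau gamma : R) : Prop :=
  [/\ poly_process P,
      (forall s t, 0 <= s -> s <= t ->
         qmul (P s t) (qsub (qmul qF qD) (qmul (qexp qF 2) (qexp qD 2)))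
         = qsub (qmul qF qD) (qmul (qexp qF 2) (qexp qD 2))) &
      exists X : Qseq R,
        (forall t, 0 <= t ->
           qmul (P 0 t) qF = qmul (qadd qF (qscale t X)) (P 0 t)) /\
        qsub (qmul X qF) (qscale gamma (qmul qF X))
        = qadd (qadd (qadd (qadd qE (qscale eta qF)) (qscale theta X))
                     (qscale sigma (qexp qF 2))) (qscale tau (qexp X 2))].

Definition is_generator (P : R -> R -> Qseq R) (A : R -> Qseq R) : Prop :=
  forall t, 0 < t -> forall n j : nat,
    (fun h : R => ((P (t - h) t n)`_j - (qE n)`_j) / h) @ 0^'+
      --> (A t n)`_j.
End Q.

Arguments qE {R}.
Arguments qF {R}.
Arguments qD {R}.

From HB Require Import structures.
From mathcomp Require Import all_boot all_order all_algebra.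
From mathcomp Require Import all_classical all_reals all_analysis.
Import Order.TTheory GRing.Theory Num.Theory.
Local Open Scope ring_scope.
Local Open Scope classical_set_scope.
Import numFieldNormedType.Exports.

Set Implicit Arguments.
Unset Strict Implicit.
Unset Printing Implicit Defensive.

(* Write W = P_{0,t}. Property (b) at the times t - h and t, combined with
   P_{0,t-h} P_{t-h,t} = W, gives P_{0,t-h} [P_{t-h,t}, F] = h X W.  Dividing by
   h and letting h -> 0+ (P_{0,t-h} -> W coefficientwise, by solving the
   triangular system P_{0,t-h} P_{t-h,t} = W row by row) yields W H_t = X W,
   hence W T_t = F W.  So W intertwines (H_t, T_t) with (X, F); as W is
   triangular, left multiplication by W is injective, and relation (c) for
   (X, F) transfers to (H_t, T_t) with the roles of the parameters swapped. *)

Section QAlgebra.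
Variable R : realType.
Implicit Types (P Q S W U V : Qseq R) (p : {poly R}).

Definition qapply P p : {poly R} := \sum_(j < size p) p`_j *: P j.

Lemma qmulE P Q k : qmul P Q k = qapply P (Q k).
Proof. by []. Qed.

Lemma qapply_widen P p n : (size p <= n)%N ->
  qapply P p = \sum_(j < n) p`_j *: P j.
Proof.
move=> le_p_n; rewrite /qapply (big_ord_widen n (fun j => p`_j *: P j) le_p_n).
rewrite big_mkcond; apply: eq_bigr => j _; case: ltnP => // le_p_j.
by rewrite nth_default // scale0r.
Qed.

Lemma qapply_is_linear P : linear (qapply P).
Proof.
move=> c p q; set n := maxn (size p) (size q).
have le_p : (size p <= n)%N by rewrite leq_maxl.
have le_q : (size q <= n)%N by rewrite leq_maxr.
have le_cpq : (size (c *: p + q)%R <= n)%N.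
  rewrite (leq_trans (size_polyD _ _)) // geq_max le_q andbT.
  exact: leq_trans (size_scale_leq _ _) le_p.
rewrite !(qapply_widen _ le_p, qapply_widen _ le_q, qapply_widen _ le_cpq).
rewrite scaler_sumr -big_split; apply: eq_bigr => j _.
by rewrite coefD coefZ scalerDl scalerA.
Qed.

HB.instance Definition _ P :=
  GRing.isLinear.Build R {poly R} {poly R} *:%R (qapply P) (qapply_is_linear P).

Lemma qapplyXn P n : qapply P 'X^n = P n.
Proof.
rewrite /qapply size_polyXn big_ord_recr /= big1 ?add0r.
  by rewrite coefXn eqxx scale1r.
by move=> i _; rewrite coefXn (ltn_eqF (ltn_ord i)) scale0r.
Qed.

Lemma qapply_qE p : qapply qE p = p.
Proof. by rewrite /qapply /qE -poly_def coefK. Qed.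

Lemma qapply_qF p : qapply qF p = 'X * p.
Proof.
rewrite -[in RHS](coefK p) poly_def mulr_sumr; apply: eq_bigr => j _.
by rewrite /qF exprS scalerAr.
Qed.

Lemma qmulA P Q S : qmul (qmul P Q) S = qmul P (qmul Q S).
Proof.
apply/funext => k; rewrite [RHS]qmulE [qmul Q S k]qmulE [qapply Q _]/qapply.
by rewrite linear_sum; apply: eq_bigr => j _; rewrite linearZ.
Qed.

Lemma qmul1l P : qmul qE P = P.
Proof. by apply/funext => k; rewrite qmulE qapply_qE. Qed.

Lemma qmul1r P : qmul P qE = P.
Proof. by apply/funext => k; rewrite qmulE qapplyXn. Qed.

Lemma qmulDl P Q S : qmul (qadd P Q) S = qadd (qmul P S) (qmul Q S).
Proof.
apply/funext => k; rewrite /qmul /qadd -big_split.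
by apply: eq_bigr => j _; rewrite scalerDr.
Qed.

Lemma qmulBl P Q S : qmul (qsub P Q) S = qsub (qmul P S) (qmul Q S).
Proof.
apply/funext => k; rewrite /qmul /qsub -sumrB.
by apply: eq_bigr => j _; rewrite scalerBr.
Qed.

Lemma qmulZl c P S : qmul (qscale c P) S = qscale c (qmul P S).
Proof.
apply/funext => k; rewrite /qmul /qscale scaler_sumr.
by apply: eq_bigr => j _; rewrite !scalerA mulrC.
Qed.

Lemma qmulDr P Q S : qmul P (qadd Q S) = qadd (qmul P Q) (qmul P S).
Proof. by apply/funext => k; rewrite !qmulE linearD. Qed.

Lemma qmulBr P Q S : qmul P (qsub Q S) = qsub (qmul P Q) (qmul P S).
Proof. by apply/funext => k; rewrite !qmulE linearB. Qed.

Lemma qmulZr c P S : qmul P (qscale c S) = qscale c (qmul P S).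
Proof. by apply/funext => k; rewrite !qmulE linearZ. Qed.

Definition triangular W := forall n, size (W n) = n.+1.

Lemma coef_qmul_diag W V k m : size (V k) = k.+1 ->
  (qmul W V k)`_m = \sum_(i < k) (V k)`_i * (W i)`_m + (V k)`_k * (W k)`_m.
Proof.
move=> szV; rewrite qmulE /qapply szV big_ord_recr coefD coef_sum coefZ.
by under eq_bigr do rewrite coefZ.
Qed.

Lemma triangular_diag_neq0 W n : triangular W -> (W n)`_n != 0.
Proof.
move=> triW; have := lead_coef_eq0 (W n).
by rewrite /lead_coef triW /= => ->; rewrite -size_poly_eq0 triW.
Qed.

(* The top coefficient of [qapply W p] is that of [p] times the nonzero one of [W]. *)
Lemma qapply_eq0 W p : triangular W -> qapply W p = 0 -> p = 0.
Proof.
move=> triW Wp0; apply/eqP; apply: contraT => p_neq0.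
have sz_p : size p = (size p).-1.+1 by rewrite prednK // lt0n size_poly_eq0.
set m := (size p).-1 in sz_p.
have := congr1 (fun q : {poly R} => q`_m) Wp0.
rewrite /qapply coef0 coef_sum sz_p big_ord_recr /= big1 ?add0r => [|i _]; last first.
  by rewrite coefZ [(W i)`_m]nth_default ?mulr0 // triW ltn_ord.
rewrite coefZ => /eqP; rewrite mulf_eq0 (negbTE (triangular_diag_neq0 _ triW)) orbF.
by rewrite -[p`_m]/(lead_coef p) /lead_coef sz_p lead_coef_eq0 (negbTE p_neq0).
Qed.

Lemma qmul_inj W : triangular W -> injective (qmul W).
Proof.
move=> triW U V eqWUV; apply/funext => k; apply/eqP; rewrite -subr_eq0; apply/eqP.
by apply: (qapply_eq0 triW); rewrite linearB /= -!qmulE eqWUV subrr.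
Qed.

Definition commF V : Qseq R := qsub (qmul V qF) (qmul qF V).

Lemma commFE V k : commF V k = V k.+1 - 'X * V k.
Proof. by rewrite /commF /qsub !qmulE qapplyXn qapply_qF. Qed.

Lemma size_commF V k n : (size (V k.+1) <= n.+1)%N -> (size (V k) <= n)%N ->
  (size (commF V k) <= n.+1)%N.
Proof.
move=> /leq_sizeP szVk1 /leq_sizeP szVk; apply/leq_sizeP => j le_j.
rewrite commFE coefB coefXM szVk1 //; case: j le_j => [|j] le_j /=.
  by rewrite subr0.
by rewrite szVk ?subrr.
Qed.

Definition intertwines W U U' := qmul W U = qmul U' W.

Lemma intertwines1 W : intertwines W qE qE.
Proof. by rewrite /intertwines qmul1l qmul1r. Qed.

Lemma intertwinesD W U U' V V' : intertwines W U U' -> intertwines W V V' ->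
  intertwines W (qadd U V) (qadd U' V').
Proof. by rewrite /intertwines qmulDr qmulDl => -> ->. Qed.

Lemma intertwinesB W U U' V V' : intertwines W U U' -> intertwines W V V' ->
  intertwines W (qsub U V) (qsub U' V').
Proof. by rewrite /intertwines qmulBr qmulBl => -> ->. Qed.

Lemma intertwinesZ W c U U' : intertwines W U U' ->
  intertwines W (qscale c U) (qscale c U').
Proof. by rewrite /intertwines qmulZr qmulZl => ->. Qed.

Lemma intertwinesM W U U' V V' : intertwines W U U' -> intertwines W V V' ->
  intertwines W (qmul U V) (qmul U' V').
Proof. by rewrite /intertwines -qmulA => -> WV; rewrite qmulA WV qmulA. Qed.

Lemma intertwinesX W U U' n : intertwines W U U' ->
  intertwines W (qexp U n) (qexp U' n).
Proof.
by move=> WU; elim: n => [|n IHn] /=; [exact: intertwines1 | exact: intertwinesM].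
Qed.

End QAlgebra.

Section QConvergence.
Variable R : realType.
Context {T : Type} (F : set_system T) {FF : ProperFilter F}.

Definition qcvg (W : T -> Qseq R) (W0 : Qseq R) :=
  forall n j, (W u n)`_j @[u --> F] --> (W0 n)`_j.

Lemma cvg_eq_near (f g : T -> R) (l : R) : (\forall u \near F, f u = g u) ->
  g u @[u --> F] --> l -> f u @[u --> F] --> l.
Proof.
move=> eq_fg; apply: cvg_trans; apply: near_eq_cvg; near=> u.
by rewrite (near eq_fg u).
Unshelve. all: by end_near.
Qed.

Lemma cvgR_unique (f : T -> R) (a b : R) :
  f u @[u --> F] --> a -> f u @[u --> F] --> b -> a = b.
Proof. by move=> /(cvg_lim (@Rhausdorff R)) <- /(cvg_lim (@Rhausdorff R)). Qed.

Lemma cvg_sum_ord N (f : 'I_N -> T -> R) (a : 'I_N -> R) :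
  (forall i, f i u @[u --> F] --> a i) ->
  \sum_(i < N) f i u @[u --> F] --> \sum_(i < N) a i.
Proof. by move=> cvg_f; apply: cvg_big => //; exact: add_continuous. Qed.

Lemma qcvg_size_le W W0 k N : qcvg W W0 ->
  (\forall u \near F, (size (W u k) <= N)%N) -> (size (W0 k) <= N)%N.
Proof.
move=> cvgW szW; apply/leq_sizeP => j le_N_j.
apply: (cvgR_unique (cvgW k j)); apply: cvg_near_cst; near=> u.
suff /leq_sizeP -> : (size (W u k) <= N)%N by [].
by near: u.
Unshelve. all: by end_near.
Qed.

Lemma qcvg_qmul W W0 V V0 : qcvg W W0 -> qcvg V V0 ->
  (forall k, exists N, \forall u \near F, (size (V u k) <= N)%N) ->
  qcvg (fun u => qmul (W u) (V u)) (qmul W0 V0).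
Proof.
move=> cvgW cvgV szV k m; have [N szVN] := szV k.
rewrite qmulE (qapply_widen _ (qcvg_size_le cvgV szVN)) coef_sum.
under eq_bigr do rewrite coefZ.
apply: cvg_eq_near (cvg_sum_ord (fun i => cvgM (cvgV k i) (cvgW i m))).
near=> u.
rewrite qmulE (qapply_widen _ (_ : size (V u k) <= N)%N) ?coef_sum.
  by apply: eq_bigr => i _; rewrite coefZ.
by near: u.
Unshelve. all: by end_near.
Qed.

Lemma qcvg_commF V V0 : qcvg V V0 -> qcvg (fun u => commF (V u)) (commF V0).
Proof.
move=> cvgV k j; rewrite commFE coefB coefXM.
under eq_cvg do rewrite commFE coefB coefXM.
apply: cvgB; first exact: cvgV.
by case: j => [|j] /=; [exact: cvg_cst | exact: cvgV].
Qed.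

End QConvergence.

Section Generator.
Variables (R : realType) (P : R -> R -> Qseq R) (A : R -> Qseq R).
Variables (X : Qseq R) (t : R).
Hypothesis P_size : forall s u n, 0 <= s -> s <= u -> size (P s u n) = n.+1.
Hypothesis P_comp : forall s u v, 0 <= s -> s <= u -> u <= v ->
  qmul (P s u) (P u v) = P s v.
Hypothesis P_X : forall s, 0 <= s ->
  qmul (P 0 s) qF = qmul (qadd qF (qscale s X)) (P 0 s).
Hypothesis A_gen : is_generator P A.
Hypothesis t_gt0 : 0 < t.

Let step h := [/\ 0 <= t - h, t - h <= t & h != 0].

Lemma near_step : \forall h \near 0^'+, step h.
Proof.
near=> h; have h_gt0 : 0 < h by near: h; exact: nbhs_right_gt.
have h_lt_t : h < t by near: h; exact: nbhs_right_lt.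
by split; rewrite ?subr_ge0 ?lerBlDr ?lerDl ?gt_eqF // ltW.
Unshelve. all: by end_near.
Qed.

Definition diffq h : Qseq R := qscale h^-1 (qsub (P (t - h) t) qE).

Lemma qcvg_diffq : qcvg 0^'+ diffq (A t).
Proof.
move=> n j; under eq_cvg do rewrite /diffq /qscale /qsub coefZ coefB mulrC.
exact: A_gen.
Qed.

Lemma size_diffq k : \forall h \near 0^'+, (size (diffq h k) <= k.+1)%N.
Proof.
near=> h; have [t_h_ge0 t_h_le _] : step h by near: h; exact: near_step.
rewrite (leq_trans (size_scale_leq _ _)) // (leq_trans (size_polyD _ _)) //.
by rewrite size_polyN /qE size_polyXn P_size // maxnn.
Unshelve. all: by end_near.
Qed.

Lemma qcvg_P_left : qcvg 0^'+ (fun h => P (t - h) t) qE.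
Proof.
move=> n j; have cvg_h : h @[h --> 0^'+] --> (0 : R).
  exact: cvg_at_right_filter cvg_id.
have cvg_Pt : h * (diffq h n)`_j + (qE n)`_j @[h --> 0^'+]
    --> 0 * (A t n)`_j + (qE n)`_j.
  exact: cvgD (cvgM cvg_h (@qcvg_diffq n j)) (cvg_cst _).
rewrite mul0r add0r in cvg_Pt.
apply: cvg_eq_near cvg_Pt.
near=> h; have [_ _ h_neq0] : step h by near: h; exact: near_step.
by rewrite /diffq /qscale /qsub coefZ mulVKf // coefB subrK.
Unshelve. all: by end_near.
Qed.

Lemma qcvg_P0_left : qcvg 0^'+ (fun h => P 0 (t - h)) (P 0 t).
Proof.
move=> n; elim/ltn_ind: n => n IHn m.
pose rest h := \sum_(i < n) (P (t - h) t n)`_i * (P 0 (t - h) i)`_m.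
have cvg_rest : rest h @[h --> 0^'+] --> \sum_(i < n) (qE n)`_i * (P 0 t i)`_m.
  by apply: cvg_sum_ord => i; apply: cvgM; [exact: qcvg_P_left | exact: IHn].
have rest0 : \sum_(i < n) (qE n)`_i * (P 0 t i)`_m = 0.
  by rewrite big1 // => i _; rewrite /qE coefXn (ltn_eqF (ltn_ord i)) mul0r.
rewrite rest0 in cvg_rest.
have cvg_diag : (P (t - h) t n)`_n @[h --> 0^'+] --> (1 : R).
  by have := @qcvg_P_left n n; rewrite /qE coefXn eqxx.
have cvg_top : ((P 0 t n)`_m - rest h) / (P (t - h) t n)`_n @[h --> 0^'+]
    --> ((P 0 t n)`_m - 0) / 1.
  apply: cvgM; first exact: cvgB (cvg_cst _) cvg_rest.
  exact: cvgV (oner_neq0 R) cvg_diag.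
rewrite subr0 divr1 in cvg_top; apply: cvg_eq_near cvg_top.
(* [P_{0,t} = P_{0,t-h} P_{t-h,t}], solved for the top row of [P_{0,t-h}]. *)
near=> h; have [t_h_ge0 t_h_le _] : step h by near: h; exact: near_step.
have diag_neq0 : (P (t - h) t n)`_n != 0.
  exact: triangular_diag_neq0 (fun k => P_size k t_h_ge0 t_h_le).
have := congr1 (fun W : Qseq R => (W n)`_m) (P_comp (lexx 0) t_h_ge0 t_h_le).
rewrite /= coef_qmul_diag ?P_size // => <-.
by rewrite /rest addrAC subrr add0r mulrC mulKf.
Unshelve. all: by end_near.
Qed.

Lemma commF_P_left h : 0 <= t - h -> t - h <= t ->
  qmul (P 0 (t - h)) (commF (P (t - h) t)) = qscale h (qmul X (P 0 t)).
Proof.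
move=> t_h_ge0 t_h_le; have P_t := P_comp (lexx 0) t_h_ge0 t_h_le.
rewrite /commF qmulBr -!qmulA P_t P_X // qmulA P_t P_X ?ltW //.
rewrite !qmulDl !qmulZl; apply/funext => k; rewrite /qsub /qadd /qscale scalerBl.
by rewrite opprD addrACA subrr add0r opprB addrC subrK.
Qed.

Lemma commF_diffq h : step h ->
  qmul (P 0 (t - h)) (commF (diffq h)) = qmul X (P 0 t).
Proof.
case=> t_h_ge0 t_h_le h_neq0.
have -> : commF (diffq h) = qscale h^-1 (commF (P (t - h) t)).
  apply/funext => k; rewrite /diffq /qscale !commFE /qsub /qE -scalerAr -scalerBr.
  by congr (_ *: _); rewrite mulrBr -exprS opprB addrA subrK.
rewrite qmulZr commF_P_left //; apply/funext => k.
by rewrite /qscale scalerA mulVf // scale1r.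
Qed.

Lemma generator_intertwines : intertwines (P 0 t) (commF (A t)) X.
Proof.
have size_commF_diffq k : exists N,
    \forall h \near 0^'+, (size (commF (diffq h) k) <= N)%N.
  exists k.+2; near=> h; apply: size_commF; near: h; exact: size_diffq.
apply/funext => k; apply/polyP => m.
have cvg_cst_XP : (qmul (P 0 (t - h)) (commF (diffq h)) k)`_m @[h --> 0^'+]
    --> (qmul X (P 0 t) k)`_m.
  apply: cvg_near_cst; near=> h.
  by rewrite commF_diffq //; near: h; exact: near_step.
apply: (cvgR_unique _ cvg_cst_XP).
exact: qcvg_qmul qcvg_P0_left (qcvg_commF qcvg_diffq) size_commF_diffq k m.
Unshelve. all: by end_near.
Qed.

End Generator.

Theorem theorem2p1 (R : realType) (P : R -> R -> Qseq R)
    (eta theta sigma tau gamma : R) (A : R -> Qseq R) :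
  quadratic_harness P eta theta sigma tau gamma ->
  is_generator P A ->
  forall t : R, 0 < t ->
    let H := qsub (qmul (A t) qF) (qmul qF (A t)) in
    let T := qsub qF (qscale t H) in
    qsub (qmul H T) (qscale gamma (qmul T H))
    = qadd (qadd (qadd (qadd qE (qscale theta H)) (qscale eta T))
                 (qscale tau (qexp H 2))) (qscale sigma (qexp T 2)).
Proof.
case=> [[P_size _ P_comp] _ [X [P_X X_F]]] A_gen t t_gt0 H T.
have P0t_tri : triangular (P 0 t) := fun n => P_size 0 t n (lexx 0) (ltW t_gt0).
have P0t_H : intertwines (P 0 t) H X.
  exact: generator_intertwines P_size P_comp P_X A_gen t_gt0.
have P0t_T : intertwines (P 0 t) T qF.
  rewrite /intertwines /T qmulBr qmulZr P0t_H P_X ?ltW // qmulDl qmulZl.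
  by apply/funext => k; rewrite /qsub /qadd addrK.
apply: (qmul_inj P0t_tri).
rewrite (intertwinesB (intertwinesM P0t_H P0t_T)
  (intertwinesZ gamma (intertwinesM P0t_T P0t_H))).
rewrite (intertwinesD (intertwinesD (intertwinesD (intertwinesD
  (intertwines1 _) (intertwinesZ theta P0t_H)) (intertwinesZ eta P0t_T))
  (intertwinesZ tau (intertwinesX 2 P0t_H))) (intertwinesZ sigma (intertwinesX 2 P0t_T))).
rewrite X_F; congr (qmul _ _); apply/funext => k.
by rewrite /qadd (addrAC (qE k)) (addrAC _ (qscale sigma _ k)).
Qed.
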